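(* Let $K$ be a (not necessarily associative) ring with identity $1_K$ and let $L$ be a field. Let $q\colon K\to L$ be a multiplicative quadratic map. Then one of the following holds: (1) there exist a composition algebra $M$ over $L$, with norm $N$, and a ring homomorphism $\varphi\colon K\to M$ such that $q(a)=N(\varphi(a))$ for all $a\in K$; (2) $\operatorname{char} L=2$ and $q$ is a ring homomorphism $K\to L$.
   Context: Let $K,L$ be (not necessarily associative) rings with identity. A map $q\colon K\to L$ is called a multiplicative quadratic map if (i) $q(ab)=q(a)q(b)$ for all $a,b\in K$; (ii) $q(n\cdot 1_K)=n^2\cdot 1_L$ for all $n\in\mathbb{Z}$; (iii) the map $f\colon K\times K\to L$, $f(a,b)=q(a+b)-q(a)-q(b)$, is biadditive. A composition algebra over a field $L$ is a unital, not necessarily associative, $L$-algebra $M$ together with a quadratic form $N\colon M\to L$ (its norm) whose associated bilinear form $N(x+y)-N(x)-N(y)$ is nondegenerate and which satisfies $N(xy)=N(x)N(y)$ for all $x,y\in M$. *)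

From HB Require Import structures.
From mathcomp Require Import all_boot all_order all_algebra.
Set Implicit Arguments. Unset Strict Implicit. Unset Printing Implicit Defensive.
Import GRing.Theory.
Local Open Scope ring_scope.

Record naRing := NaRing {
  na_carrier :> zmodType;
  na_mul : na_carrier -> na_carrier -> na_carrier;
  na_one : na_carrier;
  na_mulDl : forall x y z, na_mul (x + y) z = na_mul x z + na_mul y z;
  na_mulDr : forall x y z, na_mul x (y + z) = na_mul x y + na_mul x z;
  na_mul1r : forall x, na_mul na_one x = x;
  na_mulr1 : forall x, na_mul x na_one = x
}.

Definition mult_quadratic_map (K : naRing) (L : fieldType) (q : K -> L) : Prop :=
  [/\ (forall a b : K, q (na_mul a b) = q a * q b),
      (forall n : int, q ((na_one K) *~ n) = ((n ^+ 2)%R)%:~R) &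
      (let f := fun a b : K => q (a + b) - q a - q b in
       (forall a b c : K, f (a + b) c = f a c + f b c) /\
       (forall a b c : K, f a (b + c) = f a b + f a c))].

Record naAlgebra (L : fieldType) := NaAlgebra {
  alg_carrier :> lmodType L;
  alg_mul : alg_carrier -> alg_carrier -> alg_carrier;
  alg_one : alg_carrier;
  alg_mulDl : forall x y z, alg_mul (x + y) z = alg_mul x z + alg_mul y z;
  alg_mulDr : forall x y z, alg_mul x (y + z) = alg_mul x y + alg_mul x z;
  alg_scalerAl : forall (c : L) x y, alg_mul (c *: x) y = c *: alg_mul x y;
  alg_scalerAr : forall (c : L) x y, alg_mul x (c *: y) = c *: alg_mul x y;
  alg_mul1r : forall x, alg_mul alg_one x = x;
  alg_mulr1 : forall x, alg_mul x alg_one = x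
}.

Definition polar (L : fieldType) (V : lmodType L) (N : V -> L) (x y : V) : L :=
  N (x + y) - N x - N y.

Definition quadratic_form (L : fieldType) (V : lmodType L) (N : V -> L) : Prop :=
  [/\ (forall (c : L) x, N (c *: x) = c ^+ 2 * N x),
      (forall x y z, polar N (x + y) z = polar N x z + polar N y z),
      (forall (c : L) x y, polar N (c *: x) y = c * polar N x y),
      (forall x y z, polar N x (y + z) = polar N x y + polar N x z) &
      (forall (c : L) x y, polar N x (c *: y) = c * polar N x y)].

Definition nondegenerate (L : fieldType) (V : lmodType L) (N : V -> L) : Prop :=
  forall x, (forall y, polar N x y = 0) -> x = 0.

Definition composition_algebra (L : fieldType) (M : naAlgebra L) (N : M -> L) : Prop :=
  [/\ quadratic_form N, nondegenerate N &
      forall x y : M, N (alg_mul x y) = N x * N y].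

Definition ring_hom_alg (K : naRing) (L : fieldType) (M : naAlgebra L) (phi : K -> M) : Prop :=
  [/\ (forall a b : K, phi (a + b) = phi a + phi b),
      (forall a b : K, phi (na_mul a b) = alg_mul (phi a) (phi b)) &
      phi (na_one K) = alg_one M].

Definition ring_hom_field (K : naRing) (L : fieldType) (q : K -> L) : Prop :=
  [/\ (forall a b : K, q (a + b) = q a + q b),
      (forall a b : K, q (na_mul a b) = q a * q b) &
      q (na_one K) = 1].

(* Let q : K -> L be multiplicative quadratic with polar form
   f(a, b) = q(a + b) - q(a) - q(b).  If f vanishes identically, q is
   additive, and f(1, 1) = 2 q(1) = 2 forces char L = 2: q is a ring
   homomorphism.  Otherwise we build the composition algebra explicitly.
   A formal L-combination v = sum_i c_i [a_i] of elements of K determines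
   the functional  b |-> sum_i c_i f(a_i, b)  and carries the "formal norm"
   Q(v) = q(sum_i c_i a_i) expanded by the quadratic rules; multiplying
   formal combinations by the multiplication of K, the linearised identity
   f(ab, cd) + f(ad, cb) = f(a, c) f(b, d)  shows that
   - the functional of a product depends only on the functionals of the
     factors, and Q is multiplicative;
   - Q vanishes on combinations with zero functional (here f <> 0 is used).
   Hence M, the L-space of functionals spanned by the f(a, -), is a unital
   algebra on which Q descends to a nondegenerate multiplicative quadratic
   form N, and a |-> f(a, -) is a ring homomorphism with q = N o phi. *)

From Pilot Require Import Defs.
From HB Require Import structures.
From mathcomp Require Import all_boot all_order all_algebra ring.
From mathcomp Require Import boolp.
Set Implicit Arguments. Unset Strict Implicit. Unset Printing Implicit Defensive.
Import GRing.Theory.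
Local Open Scope ring_scope.

Definition qpolar (K : naRing) (L : comPzRingType) (q : K -> L) (a b : K) : L :=
  q (a + b) - q a - q b.

Section PolarCalculus.
Variables (K : naRing) (L : comPzRingType) (q : K -> L).
Local Notation "a ** b" := (na_mul a b) (at level 40).
Local Notation one := (na_one K).
Local Notation f := (qpolar q).

Hypothesis qM : forall a b, q (a ** b) = q a * q b.
Hypothesis q_two : q (one + one) = 4%:R.
Hypothesis fDl : forall a b c, f (a + b) c = f a c + f b c.
Hypothesis fDr : forall a b c, f a (b + c) = f a b + f a c.

Lemma qpolarC a b : f a b = f b a.
Proof. by rewrite /qpolar (addrC a b); ring. Qed.

Lemma q_addE a b : q (a + b) = q a + q b + f a b.
Proof. by rewrite /qpolar; ring. Qed.

(* f(a, a) = q(2a) - 2q(a) = 4q(a) - 2q(a), using q(2a) = q(1 + 1) q(a). *)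
Lemma qpolar_diag a : f a a = 2%:R * q a.
Proof.
have two_a : a + a = (one + one) ** a by rewrite na_mulDl na_mul1r.
by rewrite /qpolar two_a qM q_two; ring.
Qed.

Lemma qpolar_mull a b c : f (a ** b) (a ** c) = q a * f b c.
Proof. by rewrite /qpolar -na_mulDr !qM; ring. Qed.

Lemma qpolar_mulr a b c : f (a ** b) (c ** b) = f a c * q b.
Proof. by rewrite /qpolar -na_mulDl !qM; ring. Qed.

(* The fully linearised composition identity, obtained by expanding both
   sides of q((a + c)(b + d)) = q(a + c) q(b + d). *)
Lemma qpolar_exchange a b c d :
  f (a ** b) (c ** d) + f (a ** d) (c ** b) = f a c * f b d.
Proof.
have expand := qM (a + c) (b + d).
rewrite na_mulDl !na_mulDr -[_ + (c ** b + c ** d)]addrA [a ** d + _]addrA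
  [a ** d + c ** b]addrC !q_addE !fDl !fDr [f (c ** b) (a ** d)]qpolarC
  !qpolar_mull !qpolar_mulr !qM in expand.
apply/eqP; rewrite -subr_eq0; apply/eqP.
move/eqP: expand; rewrite -subr_eq0 => /eqP expand; rewrite -expand.
by ring.
Qed.

(* Formal L-combinations sum_i c_i [a_i] of elements of K are lists of
   pairs (c_i, a_i).  [pairing v] is the functional of v, [cform] the
   bilinear form induced by f, and [cnorm] the formal norm. *)
Definition pairing (v : seq (L * K)) (b : K) : L := \sum_(p <- v) p.1 * f p.2 b.

Definition cform (v w : seq (L * K)) : L := \sum_(p <- w) p.1 * pairing v p.2.

Fixpoint cnorm (v : seq (L * K)) : L :=
  if v is p :: v' then p.1 ^+ 2 * q p.2 + p.1 * pairing v' p.2 + cnorm v' else 0.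

Definition cscale (c : L) (v : seq (L * K)) : seq (L * K) :=
  [seq (c * p.1, p.2) | p <- v].

Definition cmul_term (u : L * K) (w : seq (L * K)) : seq (L * K) :=
  [seq (u.1 * s.1, u.2 ** s.2) | s <- w].

Definition cmul (v w : seq (L * K)) : seq (L * K) :=
  [seq (p.1 * s.1, p.2 ** s.2) | p <- v, s <- w].

Lemma cmul_cons u v w : cmul (u :: v) w = cmul_term u w ++ cmul v w.
Proof. by []. Qed.

Lemma pairing_nil b : pairing [::] b = 0.
Proof. by rewrite /pairing big_nil. Qed.

Lemma pairing_cons p v b : pairing (p :: v) b = p.1 * f p.2 b + pairing v b.
Proof. by rewrite /pairing big_cons. Qed.

Lemma pairing_cat v w b : pairing (v ++ w) b = pairing v b + pairing w b.
Proof. by rewrite /pairing big_cat. Qed.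

Lemma pairing_scale c v b : pairing (cscale c v) b = c * pairing v b.
Proof. by rewrite /pairing big_map mulr_sumr; apply: eq_bigr => p _ /=; ring. Qed.

Lemma pairing_cmul_term u w b :
  pairing (cmul_term u w) b = u.1 * \sum_(s <- w) s.1 * f (u.2 ** s.2) b.
Proof. by rewrite /pairing big_map mulr_sumr; apply: eq_bigr => s _ /=; ring. Qed.

Lemma cform_nill w : cform [::] w = 0.
Proof. by rewrite /cform big1 // => p _; rewrite pairing_nil mulr0. Qed.

Lemma cform_nilr v : cform v [::] = 0.
Proof. by rewrite /cform big_nil. Qed.

Lemma cform_consr v p w : cform v (p :: w) = p.1 * pairing v p.2 + cform v w.
Proof. by rewrite /cform big_cons. Qed.

Lemma cform_catr v w w' : cform v (w ++ w') = cform v w + cform v w'.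
Proof. by rewrite /cform big_cat. Qed.

Lemma cform_sym v w : cform v w = cform w v.
Proof.
rewrite /cform /pairing.
under eq_bigr => p _ do rewrite mulr_sumr.
rewrite exchange_big; apply: eq_bigr => s _; rewrite mulr_sumr.
by apply: eq_bigr => p _; rewrite qpolarC; ring.
Qed.

Lemma cform_consl p v w : cform (p :: v) w = p.1 * pairing w p.2 + cform v w.
Proof. by rewrite cform_sym cform_consr cform_sym. Qed.

Lemma cnorm_cat v w : cnorm (v ++ w) = cnorm v + cnorm w + cform v w.
Proof.
elim: v => [|p v IH] /=; first by rewrite cform_nill; ring.
by rewrite pairing_cat IH cform_consl; ring.
Qed.

Lemma cnorm_scale c v : cnorm (cscale c v) = c ^+ 2 * cnorm v.
Proof. by elim: v => [|p v IH] /=; [ring | rewrite pairing_scale IH; ring]. Qed.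

Lemma pairing_cmul v w b :
  pairing (cmul v w) b = \sum_(p <- v) \sum_(s <- w) p.1 * s.1 * f (p.2 ** s.2) b.
Proof. by rewrite /pairing /cmul big_allpairs_dep. Qed.

(* The functional of a product only depends on the functional of each
   factor: f(ab, x) = f(a, x) f(b, 1) - f(a, x b) and symmetrically. *)
Lemma pairing_cmulL v w b :
  pairing (cmul v w) b = \sum_(s <- w) s.1 * (f s.2 one * pairing v b - pairing v (b ** s.2)).
Proof.
rewrite pairing_cmul exchange_big; apply: eq_bigr => s _ /=.
rewrite /pairing mulr_sumr -sumrB mulr_sumr; apply: eq_bigr => p _ /=.
have := qpolar_exchange p.2 s.2 b one; rewrite !na_mulr1 => exch.
have -> : f (p.2 ** s.2) b = f p.2 b * f s.2 one - f p.2 (b ** s.2).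
  by rewrite -exch; ring.
by ring.
Qed.

Lemma pairing_cmulR v w b :
  pairing (cmul v w) b = \sum_(p <- v) p.1 * (f p.2 one * pairing w b - pairing w (p.2 ** b)).
Proof.
rewrite pairing_cmul; apply: eq_bigr => p _ /=.
rewrite /pairing mulr_sumr -sumrB mulr_sumr; apply: eq_bigr => s _ /=.
have := qpolar_exchange p.2 s.2 one b; rewrite !na_mul1r => exch.
have -> : f (p.2 ** s.2) b = f p.2 one * f s.2 b - f s.2 (p.2 ** b).
  by rewrite -exch [f (p.2 ** b) s.2]qpolarC; ring.
by ring.
Qed.

Lemma cmul_congrL v v' w : pairing v =1 pairing v' -> pairing (cmul v w) =1 pairing (cmul v' w).
Proof. by move=> E b; rewrite !pairing_cmulL; apply: eq_bigr => s _; rewrite !E. Qed.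

Lemma cmul_congrR v w w' : pairing w =1 pairing w' -> pairing (cmul v w) =1 pairing (cmul v w').
Proof. by move=> E b; rewrite !pairing_cmulR; apply: eq_bigr => s _; rewrite !E. Qed.

Lemma cmul_radical r w : pairing r =1 (fun _ => 0) -> pairing (cmul r w) =1 (fun _ => 0).
Proof. by move=> E b; rewrite pairing_cmulL big1 // => s _; rewrite !E; ring. Qed.

Lemma cform_radical r w : pairing r =1 (fun _ => 0) -> cform r w = 0.
Proof. by move=> r0; rewrite /cform big1 // => p _; rewrite r0 mulr0. Qed.

Lemma cmul_unitl w : cmul [:: (1, one)] w = w.
Proof.
rewrite cmul_cons cats0 -[RHS]map_id; apply: eq_map => -[c e] /=.
by rewrite mul1r na_mul1r.
Qed.

Lemma cmul_unitr v : cmul v [:: (1, one)] = v.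
Proof. by elim: v => [|[c e] v IH] //; rewrite cmul_cons /= IH mulr1 na_mulr1. Qed.

(* Multiplicativity of the formal norm, by induction on the left factor:
   Q(u w) = c^2 q(a) Q(w) for a single term u = c[a], and the cross term
   between c[a] w and c'[a'] w is c c' f(a, a') Q(w). *)
Lemma cnorm_cmul_term u w : cnorm (cmul_term u w) = u.1 ^+ 2 * q u.2 * cnorm w.
Proof.
elim: w => [|s w IH] /=; first by ring.
rewrite IH pairing_cmul_term qM.
have -> : \sum_(t <- w) t.1 * f (u.2 ** t.2) (u.2 ** s.2) = q u.2 * pairing w s.2.
  by rewrite /pairing mulr_sumr; apply: eq_bigr => t _; rewrite qpolar_mull; ring.
by ring.
Qed.

Lemma cform_cmul_terms u u' w :
  cform (cmul_term u w) (cmul_term u' w) = u.1 * u'.1 * f u.2 u'.2 * cnorm w.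
Proof.
elim: w => [|s w IH] /=; first by rewrite cform_nill; ring.
rewrite cform_consl cform_consr pairing_cons IH !pairing_cmul_term qpolar_mulr.
set S := \sum_(t <- w) t.1 * f (u.2 ** t.2) (u'.2 ** s.2).
set S' := \sum_(t <- w) t.1 * f (u'.2 ** t.2) (u.2 ** s.2).
have cross : S + S' = f u.2 u'.2 * pairing w s.2.
  rewrite -big_split /pairing mulr_sumr; apply: eq_bigr => t _ /=.
  by rewrite [f (u'.2 ** t.2) _]qpolarC -mulrDr qpolar_exchange; ring.
have -> : S = f u.2 u'.2 * pairing w s.2 - S' by rewrite -cross; ring.
by rewrite /= [f u'.2 u.2]qpolarC; ring.
Qed.

Lemma cform_cmul_term_cmul u v w :
  cform (cmul_term u w) (cmul v w) = u.1 * pairing v u.2 * cnorm w.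
Proof.
elim: v => [|p v IH]; first by rewrite /= cform_nilr pairing_nil; ring.
by rewrite cmul_cons cform_catr cform_cmul_terms IH pairing_cons qpolarC; ring.
Qed.

Lemma cnorm_mul v w : cnorm (cmul v w) = cnorm v * cnorm w.
Proof.
elim: v => [|p v IH]; first by rewrite /=; ring.
by rewrite cmul_cons cnorm_cat cnorm_cmul_term IH cform_cmul_term_cmul /=; ring.
Qed.

Lemma pairing_cmul_single x c e y :
  pairing (cmul x [:: (c, e)]) y = \sum_(s <- x) s.1 * c * f (s.2 ** e) y.
Proof. by rewrite pairing_cmul; apply: eq_bigr => s _; rewrite big_cons big_nil addr0. Qed.

(* Right multiplication by [a] and [b] relates the formal norm to f(a, b);
   this is what makes the formal norm vanish on the radical. *)
Lemma cform_cmul_singletons x a b :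
  cform (cmul x [:: (1, a)]) (cmul x [:: (1, b)]) = cnorm x * f a b.
Proof.
elim: x => [|p x IH]; first by rewrite /= cform_nill; ring.
rewrite !cmul_cons /= cform_consl cform_consr pairing_cons IH qpolar_mull.
set S := pairing (cmul x [:: (1, a)]) (p.2 ** b).
set S' := pairing (cmul x [:: (1, b)]) (p.2 ** a).
have cross : S + S' = f a b * pairing x p.2.
  rewrite /S /S' !pairing_cmul_single -big_split /pairing mulr_sumr.
  apply: eq_bigr => s _ /=.
  transitivity (s.1 * (f (s.2 ** a) (p.2 ** b) + f (s.2 ** b) (p.2 ** a))); first by ring.
  by rewrite qpolar_exchange; ring.
have -> : S = f a b * pairing x p.2 - S' by rewrite -cross; ring.
by rewrite /= [f b a]qpolarC; ring.
Qed.

End PolarCalculus.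

(* The L-space of functionals K -> L spanned by the f(a, -).  Functionals
   are compared extensionally, so this is the space of formal combinations
   modulo the radical of [cform]. *)
Record polar_span (K : naRing) (L : fieldType) (q : K -> L) := PolarSpan {
  pfun : K -> L;
  pfun_span : exists v : seq (L * K), pfun = pairing q v }.

HB.instance Definition _ (K : naRing) (L : fieldType) (q : K -> L) :=
  gen_eqMixin (polar_span q).
HB.instance Definition _ (K : naRing) (L : fieldType) (q : K -> L) :=
  gen_choiceMixin (polar_span q).

Section PolarSpanZmodule.
Variables (K : naRing) (L : fieldType) (q : K -> L).

Lemma polar_span_ext (g h : polar_span q) : pfun g =1 pfun h -> g = h.
Proof.
case: g => g gP; case: h => h hP /= /funext gh; subst h.
by rewrite (Prop_irrelevance gP hP).
Qed.

Lemma zero_in_span : exists v, (fun _ : K => 0 : L) = pairing q v.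
Proof. by exists [::]; apply: funext => b; rewrite pairing_nil. Qed.

Lemma add_in_span (g h : polar_span q) :
  exists v, (fun b => pfun g b + pfun h b) = pairing q v.
Proof.
have [v ->] := pfun_span g; have [w ->] := pfun_span h.
by exists (v ++ w); apply: funext => b; rewrite pairing_cat.
Qed.

Lemma scale_in_span c (g : polar_span q) : exists v, (fun b => c * pfun g b) = pairing q v.
Proof.
have [v ->] := pfun_span g.
by exists (cscale c v); apply: funext => b; rewrite pairing_scale.
Qed.

Lemma opp_in_span (g : polar_span q) : exists v, (fun b => - pfun g b) = pairing q v.
Proof.
have [v gE] := scale_in_span (-1) g.
by exists v; rewrite -gE; apply: funext => b; rewrite mulN1r.
Qed.

Definition span_zero : polar_span q := PolarSpan zero_in_span.
Definition span_add g h : polar_span q := PolarSpan (add_in_span g h).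
Definition span_opp g : polar_span q := PolarSpan (opp_in_span g).
Definition span_scale c g : polar_span q := PolarSpan (scale_in_span c g).

Lemma span_addA : associative span_add.
Proof. by move=> g h k; apply: polar_span_ext => b /=; rewrite addrA. Qed.
Lemma span_addC : commutative span_add.
Proof. by move=> g h; apply: polar_span_ext => b /=; rewrite addrC. Qed.
Lemma span_add0 : left_id span_zero span_add.
Proof. by move=> g; apply: polar_span_ext => b /=; rewrite add0r. Qed.
Lemma span_addN : left_inverse span_zero span_opp span_add.
Proof. by move=> g; apply: polar_span_ext => b /=; rewrite addNr. Qed.
End PolarSpanZmodule.

HB.instance Definition _ (K : naRing) (L : fieldType) (q : K -> L) :=
  GRing.isZmodule.Build (polar_span q)
    (@span_addA K L q) (@span_addC K L q) (@span_add0 K L q) (@span_addN K L q).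

Section PolarSpanLmodule.
Variables (K : naRing) (L : fieldType) (q : K -> L).

Lemma span_scaleA a b (g : polar_span q) :
  span_scale a (span_scale b g) = span_scale (a * b) g.
Proof. by apply: polar_span_ext => x /=; rewrite mulrA. Qed.
Lemma span_scale1 : left_id 1 (@span_scale K L q).
Proof. by move=> g; apply: polar_span_ext => x /=; rewrite mul1r. Qed.
Lemma span_scaleDr : right_distributive (@span_scale K L q) +%R.
Proof. by move=> a g h; apply: polar_span_ext => x /=; rewrite mulrDr. Qed.
Lemma span_scaleDl (g : polar_span q) : {morph (@span_scale K L q)^~ g : a b / a + b}.
Proof. by move=> a b; apply: polar_span_ext => x /=; rewrite mulrDl. Qed.
End PolarSpanLmodule.

HB.instance Definition _ (K : naRing) (L : fieldType) (q : K -> L) :=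
  GRing.Zmodule_isLmodule.Build L (polar_span q) (@span_scaleA K L q)
    (@span_scale1 K L q) (@span_scaleDr K L q) (@span_scaleDl K L q).

Lemma pfunD (K : naRing) (L : fieldType) (q : K -> L) (g h : polar_span q) b :
  pfun (g + h) b = pfun g b + pfun h b.
Proof. by []. Qed.

Lemma pfunZ (K : naRing) (L : fieldType) (q : K -> L) c (g : polar_span q) b :
  pfun (c *: g) b = c * pfun g b.
Proof. by []. Qed.

Lemma pfun0 (K : naRing) (L : fieldType) (q : K -> L) b : pfun (0 : polar_span q) b = 0.
Proof. by []. Qed.

Section CompositionModel.
Variables (K : naRing) (L : fieldType) (q : K -> L).
Local Notation "a ** b" := (na_mul a b) (at level 40).
Local Notation one := (na_one K).
Local Notation f := (qpolar q).
Local Notation pairing := (pairing q).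
Local Notation cform := (cform q).
Local Notation cnorm := (cnorm q).

Hypothesis qM : forall a b, q (a ** b) = q a * q b.
Hypothesis fDl : forall a b c, f (a + b) c = f a c + f b c.
Hypothesis fDr : forall a b c, f a (b + c) = f a b + f a c.
Hypothesis polar_nz : exists a b, f a b != 0.

(* A combination with zero functional has formal norm 0: if f(a, b) <> 0,
   then 0 = cform (r [a]) (r [b]) = Q(r) f(a, b). *)
Lemma cnorm_radical r : pairing r =1 (fun _ => 0) -> cnorm r = 0.
Proof.
move=> r0; have [a [b fab]] := polar_nz.
have := cform_cmul_singletons qM fDl fDr r a b.
rewrite cform_radical => [/esym/eqP|c]; last exact: cmul_radical.
by rewrite mulf_eq0 (negbTE fab) orbF => /eqP.
Qed.

Lemma cnorm_congr v v' : pairing v =1 pairing v' -> cnorm v = cnorm v'.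
Proof.
move=> vv'.
pose z := v ++ cscale (-1) v; pose d := cscale (-1) v ++ v'.
have z0 : pairing z =1 (fun _ => 0) by move=> b; rewrite pairing_cat pairing_scale; ring.
have d0 : pairing d =1 (fun _ => 0).
  by move=> b; rewrite pairing_cat pairing_scale vv'; ring.
have : cnorm (v ++ d) = cnorm (z ++ v') by rewrite /z /d catA.
clearbody z d.
rewrite !cnorm_cat (cnorm_radical d0) (cnorm_radical z0) (cform_radical _ z0).
by rewrite cform_sym (cform_radical _ d0) !addr0 add0r.
Qed.

Local Notation M := (polar_span q).

Definition rep (g : M) : seq (L * K) := projT1 (cid (pfun_span g)).

Lemma repE g : pfun g =1 pairing (rep g).
Proof. by move=> b; rewrite /rep; case: (cid (pfun_span g)) => v /= ->. Qed.

Definition span_mul (g h : M) : M :=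
  @PolarSpan K L q (pairing (cmul (rep g) (rep h))) (ex_intro _ _ erefl).
Definition embed (a : K) : M := @PolarSpan K L q (pairing [:: (1, a)]) (ex_intro _ _ erefl).
Definition span_one : M := embed one.
Definition span_norm (g : M) : L := cnorm (rep g).

Lemma span_normE g v : pfun g =1 pairing v -> span_norm g = cnorm v.
Proof. by move=> gv; apply: cnorm_congr => b; rewrite -repE gv. Qed.

Lemma rep_embed a : pairing (rep (embed a)) =1 pairing [:: (1, a)].
Proof. by move=> b; rewrite -repE. Qed.

Lemma span_mulDl g h k : span_mul (g + h) k = span_mul g k + span_mul h k.
Proof.
apply: polar_span_ext => b; rewrite pfunD /= !(pairing_cmulL qM fDl fDr) -big_split.
by apply: eq_bigr => s _ /=; rewrite -!repE !pfunD; ring.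
Qed.

Lemma span_mulDr g h k : span_mul g (h + k) = span_mul g h + span_mul g k.
Proof.
apply: polar_span_ext => b; rewrite pfunD /= !(pairing_cmulR qM fDl fDr) -big_split.
by apply: eq_bigr => s _ /=; rewrite -!repE !pfunD; ring.
Qed.

Lemma span_scalerAl c g h : span_mul (c *: g) h = c *: span_mul g h.
Proof.
apply: polar_span_ext => b; rewrite pfunZ /= !(pairing_cmulL qM fDl fDr) mulr_sumr.
by apply: eq_bigr => s _ /=; rewrite -!repE !pfunZ; ring.
Qed.

Lemma span_scalerAr c g h : span_mul g (c *: h) = c *: span_mul g h.
Proof.
apply: polar_span_ext => b; rewrite pfunZ /= !(pairing_cmulR qM fDl fDr) mulr_sumr.
by apply: eq_bigr => s _ /=; rewrite -!repE !pfunZ; ring.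
Qed.

Lemma span_mul1r g : span_mul span_one g = g.
Proof.
apply: polar_span_ext => b /=.
by rewrite (cmul_congrL qM fDl fDr _ (rep_embed one)) cmul_unitl repE.
Qed.

Lemma span_mulr1 g : span_mul g span_one = g.
Proof.
apply: polar_span_ext => b /=.
by rewrite (cmul_congrR qM fDl fDr _ (rep_embed one)) cmul_unitr repE.
Qed.

Definition polar_algebra : naAlgebra L :=
  @NaAlgebra L M span_mul span_one span_mulDl span_mulDr span_scalerAl span_scalerAr
    span_mul1r span_mulr1.

Local Notation N := (span_norm : polar_algebra -> L).

Lemma polar_span_normE (g h : M) : polar N g h = \sum_(p <- rep h) p.1 * pfun g p.2.
Proof.
rewrite /polar (@span_normE (g + h) (rep g ++ rep h)); last first.
  by move=> b; rewrite pfunD pairing_cat !repE.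
rewrite cnorm_cat /span_norm /cform.
have -> : forall x y z : L, x + y + z - x - y = z by move=> x y z; ring.
by apply: eq_bigr => p _; rewrite repE.
Qed.

Lemma polar_span_normC (g h : M) : polar N g h = polar N h g.
Proof. by rewrite /polar [g + h]addrC addrAC. Qed.

Lemma span_norm_quadratic : quadratic_form N.
Proof.
have polarDl (g h k : M) : polar N (g + h) k = polar N g k + polar N h k.
  by rewrite !polar_span_normE -big_split; apply: eq_bigr => p _ /=; ring.
have polarZl c (g h : M) : polar N (c *: g) h = c * polar N g h.
  by rewrite !polar_span_normE mulr_sumr; apply: eq_bigr => p _ /=; ring.
split=> //.
- move=> c g; rewrite (@span_normE (c *: g) (cscale c (rep g))) ?cnorm_scale //.
  by move=> b; rewrite pfunZ pairing_scale repE.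
- by move=> g h k; rewrite !(polar_span_normC g) polarDl.
- by move=> c g h; rewrite !(polar_span_normC g) polarZl.
Qed.

(* The polar form pairs g with embed b to the value g(b). *)
Lemma span_norm_nondegenerate : Defs.nondegenerate N.
Proof.
move=> g g_rad; apply: polar_span_ext => b; rewrite pfun0.
rewrite repE -(g_rad (embed b)) polar_span_normC polar_span_normE.
by rewrite /pairing; apply: eq_bigr => p _ /=; rewrite pairing_cons pairing_nil /= mul1r addr0 qpolarC.
Qed.

Lemma span_norm_mul (g h : polar_algebra) : N (alg_mul g h) = N g * N h.
Proof. by rewrite (@span_normE (span_mul g h) (cmul (rep g) (rep h))) ?cnorm_mul. Qed.

Lemma embed_hom : ring_hom_alg (embed : K -> polar_algebra).
Proof.
split=> // [a b | a b]; apply: polar_span_ext => x.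
  by rewrite pfunD /= !pairing_cons !pairing_nil fDl; ring.
rewrite /= (cmul_congrL qM fDl fDr _ (rep_embed a)) (cmul_congrR qM fDl fDr _ (rep_embed b)).
by rewrite !pairing_cons !pairing_nil /= mulr1.
Qed.

Lemma q_embed a : q a = N (embed a).
Proof. by rewrite (@span_normE (embed a) [:: (1, a)]) //= pairing_nil; ring. Qed.

Lemma composition_model : exists (M : naAlgebra L) (N : M -> L) (phi : K -> M),
  composition_algebra N /\ ring_hom_alg phi /\ (forall a : K, q a = N (phi a)).
Proof.
exists polar_algebra, N, embed; split; last by split; [exact: embed_hom | exact: q_embed].
by split; [exact: span_norm_quadratic | exact: span_norm_nondegenerate | exact: span_norm_mul].
Qed.

End CompositionModel.

(* Case f = 0: q is additive, and f(1, 1) = 2 q(1) = 2 forces char L = 2. *)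
Lemma degenerate_case (K : naRing) (L : fieldType) (q : K -> L) :
  (forall a b, q (na_mul a b) = q a * q b) ->
  q (na_one K + na_one K) = 4%:R -> q (na_one K) = 1 ->
  (forall a b, qpolar q a b = 0) ->
  2%N \in [pchar L] /\ ring_hom_field q.
Proof.
move=> qM q_two q_one f0; split; last by split=> // a b; rewrite q_addE f0 addr0.
rewrite inE /=; apply/eqP.
by have := qpolar_diag qM q_two (na_one K); rewrite f0 q_one mulr1.
Qed.

Theorem theorem1p2 (K : naRing) (L : fieldType) (q : K -> L) :
  mult_quadratic_map q ->
  (exists (M : naAlgebra L) (N : M -> L) (phi : K -> M),
      composition_algebra N /\ ring_hom_alg phi /\ (forall a : K, q a = N (phi a)))
  \/ (2%N \in [pchar L] /\ ring_hom_field q).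
Proof.
case=> qM q_int polar_additive.
have [fDl fDr] : (forall a b c, qpolar q (a + b) c = qpolar q a c + qpolar q b c) /\
                 (forall a b c, qpolar q a (b + c) = qpolar q a b + qpolar q a c).
  exact: polar_additive.
have q_one : q (na_one K) = 1 by have := q_int 1; rewrite mulr1z.
have q_two : q (na_one K + na_one K) = 4%:R by have := q_int 2; rewrite -mulr2n.
have [polar_nz | polar_zero] := pselect (exists a b, qpolar q a b != 0).
  by left; exact: composition_model qM fDl fDr polar_nz.
right; apply: degenerate_case => // a b.
have [// | fab] := eqVneq (qpolar q a b) 0.
by case: polar_zero; exists a, b.
Qed.
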